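(* Let $b>-1$, $b\neq0$, and let $C$ be the curve $y^2+(x^2-1)(x^2+b)=0$; write this equation as $y^2+x^4+Ax^2+B=0$ (so $A=b-1$, $B=-b$). Then the convex hull of $C(\mathbb{R})$ in $\mathbb{R}^2$ is the set of $(x,y)\in\mathbb{R}^2$ for which there exist $u_2,u_3,u_4,v_1,v_2\in\mathbb{R}$ such that $$\begin{pmatrix}1&x&u_2&y\\ x&u_2&u_3&v_1\\ u_2&u_3&u_4&v_2\\ y&v_1&v_2&-B-Au_2-u_4\end{pmatrix}\succeq0.$$
   Context: $S\succeq0$ means the real symmetric matrix $S$ is positive semidefinite. *)

From HB Require Import structures.
From mathcomp Require Import all_boot all_order all_algebra.
Set Implicit Arguments. Unset Strict Implicit. Unset Printing Implicit Defensive.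
Import Order.TTheory GRing.Theory Num.Theory.
Local Open Scope ring_scope.

Definition psd (R : numDomainType) (n : nat) (S : 'M[R]_n) : Prop :=
  S^T = S /\ forall v : 'cV[R]_n, 0 <= (v^T *m S *m v) 0 0.

Definition on_curve (R : numDomainType) (A B : R) (p : R * R) : Prop :=
  p.2 ^+ 2 + p.1 ^+ 4 + A * p.1 ^+ 2 + B = 0.

Definition conv_hull (R : numDomainType) (P : R * R -> Prop) (p : R * R) : Prop :=
  exists (n : nat) (w : 'I_n -> R) (q : 'I_n -> R * R),
    [/\ forall i, 0 <= w i,
        \sum_(i < n) w i = 1,
        forall i, P (q i),
        p.1 = \sum_(i < n) w i * (q i).1 &
        p.2 = \sum_(i < n) w i * (q i).2].

Definition mom_mx (R : numDomainType) (A B x y u2 u3 u4 v1 v2 : R) : 'M[R]_4 :=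
  \matrix_(i < 4, j < 4)
    nth 0 (nth [::] [:: [:: 1; x; u2; y];
                        [:: x; u2; u3; v1];
                        [:: u2; u3; u4; v2];
                        [:: y; v1; v2; - B - A * u2 - u4]] i) j.

(* If (x, y) is a convex combination of points (a, c) of the curve, the averaged
   moments u2 = E[a^2], u3 = E[a^3], u4 = E[a^4], v1 = E[a c], v2 = E[a^2 c] make the
   matrix an average of rank-one matrices m m^T, m = (1, a, a^2, c); on the curve
   c^2 = -B - A a^2 - a^4, which is the last entry.

   Conversely, testing a positive semidefinite moment matrix against three vectors
   gives y^2 <= c^2 - B - (A + 2c) x^2 whenever A + 2c >= 0.  If b - 1 + 2x^2 >= 0,
   the choice c = x^2 gives y^2 <= (1 - x^2)(x^2 + b), so (x, y) lies on the vertical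
   segment between two points of the curve.  Otherwise c = (1 - b)/2 gives
   |y| <= (1 + b)/2 and |x| <= sqrt c, a box whose four corners lie on the curve. *)
From HB Require Import structures.
From mathcomp Require Import all_boot all_order all_algebra.
From mathcomp Require Import ring lra.
Set Implicit Arguments.
Unset Strict Implicit.
Unset Printing Implicit Defensive.
Import Order.TTheory GRing.Theory Num.Theory.
Local Open Scope ring_scope.

Lemma psd_sum (R : numDomainType) (n k : nat) (w : 'I_k -> R) (S : 'I_k -> 'M[R]_n) :
  (forall i, 0 <= w i) -> (forall i, psd (S i)) -> psd (\sum_i w i *: S i).
Proof.
move=> w_ge0 S_psd; split.
  by rewrite linear_sum; apply: eq_bigr => i _; rewrite linearZ /= (proj1 (S_psd i)).
move=> v; rewrite mulmx_sumr mulmx_suml summxE; apply: sumr_ge0 => i _.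
by rewrite -scalemxAr -scalemxAl mxE mulr_ge0 // (proj2 (S_psd i)).
Qed.

Lemma psd_outer (R : realDomainType) (n : nat) (m : 'cV[R]_n) : psd (m *m m^T).
Proof.
split; first by rewrite trmx_mul trmxK.
move=> v; rewrite mulmxA -mulmxA.
have -> : m^T *m v = (v^T *m m)^T by rewrite trmx_mul trmxK.
by rewrite mxE big_ord1 !mxE -expr2 sqr_ge0.
Qed.

Definition vec4 (R : numDomainType) (a0 a1 a2 a3 : R) : 'cV[R]_4 :=
  \col_(i < 4) nth 0 [:: a0; a1; a2; a3] i.

Lemma mom_mx_qform (R : numDomainType) (A B x y u2 u3 u4 v1 v2 a0 a1 a2 a3 : R) :
  ((vec4 a0 a1 a2 a3)^T *m mom_mx A B x y u2 u3 u4 v1 v2 *m vec4 a0 a1 a2 a3) 0 0 =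
  a0 ^+ 2 + 2 * a0 * a1 * x + (2 * a0 * a2 + a1 ^+ 2) * u2 + 2 * a0 * a3 * y
  + 2 * a1 * a2 * u3 + 2 * a1 * a3 * v1 + a2 ^+ 2 * u4 + 2 * a2 * a3 * v2
  + a3 ^+ 2 * (- B - A * u2 - u4).
Proof. by rewrite !(mxE, big_ord_recl, big_ord0) /=; ring. Qed.

Lemma mom_mx_on_curve (R : numDomainType) (A B a c : R) :
  on_curve A B (a, c) ->
  mom_mx A B a c (a ^+ 2) (a ^+ 3) (a ^+ 4) (a * c) (a ^+ 2 * c) =
  vec4 1 a (a ^+ 2) c *m (vec4 1 a (a ^+ 2) c)^T.
Proof.
rewrite /on_curve /= => curve; apply/matrixP => i j.
rewrite !mxE big_ord1 !mxE.
case: i => [[|[|[|[|//]]]] ?]; case: j => [[|[|[|[|//]]]] ?] /=; try ring.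
by rewrite -[RHS]subr0 -curve; ring.
Qed.

Lemma mom_mx_convex_comb (R : numDomainType) (A B : R) (k : nat) (w : 'I_k -> R)
    (x y u2 u3 u4 v1 v2 : 'I_k -> R) :
  \sum_i w i = 1 ->
  mom_mx A B (\sum_i w i * x i) (\sum_i w i * y i) (\sum_i w i * u2 i)
    (\sum_i w i * u3 i) (\sum_i w i * u4 i) (\sum_i w i * v1 i) (\sum_i w i * v2 i) =
  \sum_i w i *: mom_mx A B (x i) (y i) (u2 i) (u3 i) (u4 i) (v1 i) (v2 i).
Proof.
move=> w_sum1; apply/matrixP => r s; rewrite !mxE summxE.
under [in RHS]eq_bigr do rewrite !mxE.
case: r => [[|[|[|[|//]]]] ?]; case: s => [[|[|[|[|//]]]] ?] //=.
- by under eq_bigr do rewrite mulr1.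
- transitivity (\sum_i (w i * (- B) - A * (w i * u2 i) - w i * u4 i)).
    by rewrite !sumrB -mulr_suml -mulr_sumr w_sum1 mul1r.
  by apply: eq_bigr => i _; ring.
Qed.

Lemma conv_hull_pt (R : numDomainType) (P : R * R -> Prop) (p : R * R) :
  P p -> conv_hull P p.
Proof.
move=> Pp; exists 1%N, (fun=> 1), (fun=> p).
by split=> //; rewrite big_ord1 ?mul1r.
Qed.

Lemma conv_hull_convex (R : numDomainType) (P : R * R -> Prop) (l : R) (p q : R * R) :
  0 <= l <= 1 -> conv_hull P p -> conv_hull P q ->
  conv_hull P (l * p.1 + (1 - l) * q.1, l * p.2 + (1 - l) * q.2).
Proof.
move=> /andP[l_ge0 l_le1].
case=> m [w1 [q1 [w1_ge0 w1_sum1 q1P -> ->]]].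
case=> n [w2 [q2 [w2_ge0 w2_sum1 q2P -> ->]]].
pose wq (i : 'I_(m + n)) :=
  match split i with inl j => (l * w1 j, q1 j) | inr k => ((1 - l) * w2 k, q2 k) end.
have sum_wq (F : R -> R * R -> R) : \sum_i F (wq i).1 (wq i).2 =
    \sum_j F (l * w1 j) (q1 j) + \sum_k F ((1 - l) * w2 k) (q2 k).
  rewrite big_split_ord; congr (_ + _); apply: eq_bigr => j _.
    by rewrite /wq (unsplitK (inl j) : split (lshift n j) = inl j).
  by rewrite /wq (unsplitK (inr j) : split (rshift m j) = inr j).
have comb (f : R * R -> R) : \sum_i (wq i).1 * f (wq i).2 =
    l * \sum_j w1 j * f (q1 j) + (1 - l) * \sum_k w2 k * f (q2 k).
  by rewrite (sum_wq (fun a r => a * f r)) !mulr_sumr; congr (_ + _);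
    apply: eq_bigr => j _; rewrite mulrA.
exists (m + n), (fun i => (wq i).1), (fun i => (wq i).2); split.
- by move=> i; rewrite /wq; case: split => j; rewrite mulr_ge0 ?subr_ge0.
- by rewrite (sum_wq (fun a _ => a)) -!mulr_sumr w1_sum1 w2_sum1 !mulr1 addrC subrK.
- by move=> i; rewrite /wq; case: split.
- by rewrite (comb fst).
- by rewrite (comb snd).
Qed.

Lemma normr_le_comb (R : realFieldType) (t r : R) :
  `|t| <= r -> exists2 l, 0 <= l <= 1 & t = l * r + (1 - l) * - r.
Proof.
move=> t_le_r; have r_ge0 : 0 <= r := le_trans (normr_ge0 t) t_le_r.
move: t_le_r; rewrite ler_norml => /andP[tr_lo tr_hi].
have [r0 | r_neq0] := eqVneq r 0.
  by exists 0; [rewrite lexx ler01 | lra].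
have r_gt0 : 0 < r + r by rewrite addr_gt0 // lt0r r_neq0.
exists ((r + t) / (r + r)).
  by rewrite divr_ge0 ?ler_pdivrMr // 1?mul1r; lra.
have -> : (r + t) / (r + r) * r + (1 - (r + t) / (r + r)) * - r =
          (r + t) / (r + r) * (r + r) - r by ring.
by rewrite divfK ?gt_eqF //; ring.
Qed.

Lemma conv_hull_vsegment (R : realFieldType) (P : R * R -> Prop) (x y r : R) :
  `|y| <= r -> conv_hull P (x, r) -> conv_hull P (x, - r) -> conv_hull P (x, y).
Proof.
move=> /normr_le_comb[l l01 ->] top bot.
have -> : x = l * x + (1 - l) * x by ring.
exact: conv_hull_convex l01 top bot.
Qed.

Lemma conv_hull_hsegment (R : realFieldType) (P : R * R -> Prop) (x y s : R) :
  `|x| <= s -> conv_hull P (s, y) -> conv_hull P (- s, y) -> conv_hull P (x, y).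
Proof.
move=> /normr_le_comb[l l01 ->] right left.
have -> : y = l * y + (1 - l) * y by ring.
exact: conv_hull_convex l01 right left.
Qed.

Lemma conv_hull_box (R : realFieldType) (P : R * R -> Prop) (x y s r : R) :
  `|x| <= s -> `|y| <= r ->
  P (s, r) -> P (- s, r) -> P (s, - r) -> P (- s, - r) -> conv_hull P (x, y).
Proof.
move=> x_le y_le Psr Pmsr Psmr Pmsmr.
by apply: conv_hull_vsegment y_le _ _; apply: conv_hull_hsegment x_le _ _;
  apply: conv_hull_pt.
Qed.

Lemma conv_hull_psd_mom_mx (R : realDomainType) (A B x y : R) :
  conv_hull (on_curve A B) (x, y) ->
  exists u2 u3 u4 v1 v2 : R, psd (mom_mx A B x y u2 u3 u4 v1 v2).
Proof.
case=> k [w [q [w_ge0 w_sum1 q_curve /= -> ->]]].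
exists (\sum_i w i * (q i).1 ^+ 2), (\sum_i w i * (q i).1 ^+ 3),
  (\sum_i w i * (q i).1 ^+ 4), (\sum_i w i * ((q i).1 * (q i).2)),
  (\sum_i w i * ((q i).1 ^+ 2 * (q i).2)).
rewrite mom_mx_convex_comb //; apply: psd_sum => // i.
by rewrite mom_mx_on_curve; [apply: psd_outer | case: (q i) (q_curve i)].
Qed.

Lemma psd_mom_mx_bound (R : realDomainType) (A B x y u2 u3 u4 v1 v2 c : R) :
  psd (mom_mx A B x y u2 u3 u4 v1 v2) -> 0 <= A + 2 * c ->
  y ^+ 2 <= c ^+ 2 - B - (A + 2 * c) * x ^+ 2.
Proof.
case=> _ M_psd Ac_ge0.
have qform_ge0 a0 a1 a2 a3 := M_psd (vec4 a0 a1 a2 a3).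
(* y^2 <= -B - A u2 - u4,  2 c u2 - c^2 <= u4  and  x^2 <= u2. *)
have := qform_ge0 (- y) 0 0 1; have := qform_ge0 (- c) 0 1 0.
have := qform_ge0 (- x) 1 0 0; rewrite !mom_mx_qform => var_ge0 u4_ge y_le.
have := mulr_ge0 Ac_ge0 var_ge0; nra.
Qed.

Lemma on_curveE (R : numDomainType) (b x y : R) :
  on_curve (b - 1) (- b) (x, y) <-> y ^+ 2 = (1 - x ^+ 2) * (x ^+ 2 + b).
Proof.
rewrite /on_curve /=.
have -> : y ^+ 2 + x ^+ 4 + (b - 1) * x ^+ 2 + - b =
          y ^+ 2 - (1 - x ^+ 2) * (x ^+ 2 + b) by ring.
by split=> [/eqP | ->]; [rewrite subr_eq0 => /eqP | rewrite subrr].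
Qed.

Lemma normr_le_sqrt (R : rcfType) (a c : R) : a ^+ 2 <= c -> `|a| <= Num.sqrt c.
Proof. by move=> /ler_wsqrtr; rewrite sqrtr_sqr. Qed.

Lemma psd_mom_mx_conv_hull (R : rcfType) (b x y u2 u3 u4 v1 v2 : R) :
  -1 < b -> psd (mom_mx (b - 1) (- b) x y u2 u3 u4 v1 v2) ->
  conv_hull (on_curve (b - 1) (- b)) (x, y).
Proof.
move=> b_gt psdM; have bound := psd_mom_mx_bound psdM.
have [x_far | x_near] := lerP 0 (b - 1 + 2 * x ^+ 2).
- pose g := (1 - x ^+ 2) * (x ^+ 2 + b).
  have y_le : y ^+ 2 <= g.
    have -> : g = x ^+ 2 ^+ 2 - - b - (b - 1 + 2 * x ^+ 2) * x ^+ 2 by rewrite /g; ring.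
    exact: bound.
  have g_sqrt : Num.sqrt g ^+ 2 = g by rewrite sqr_sqrtr // (le_trans (sqr_ge0 y)).
  apply: conv_hull_vsegment (normr_le_sqrt y_le) _ _; apply: conv_hull_pt;
    by apply/on_curveE; rewrite ?sqrrN g_sqrt.
- pose c := (1 - b) / 2; pose r := (1 + b) / 2.
  have c_gt0 : 0 < c by have := sqr_ge0 x; rewrite /c; lra.
  have r_gt0 : 0 < r by rewrite /r; lra.
  have coef0 : b - 1 + 2 * c = 0 by rewrite /c; field.
  have corner : (1 - c) * (c + b) = r ^+ 2 by rewrite /c /r; field.
  have y_le : `|y| <= r.
    have -> : r = Num.sqrt (r ^+ 2) by rewrite sqrtr_sqr gtr0_norm.
    rewrite -corner; apply: normr_le_sqrt.
    have c_sq : c ^+ 2 - - b = (1 - c) * (c + b) by rewrite /c; field.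
    by have := bound c; rewrite coef0 lexx mul0r subr0 c_sq => /(_ isT).
  have x_le : `|x| <= Num.sqrt c by apply: normr_le_sqrt; rewrite /c; lra.
  have c_sqrt : Num.sqrt c ^+ 2 = c by rewrite sqr_sqrtr ?ltW.
  by apply: conv_hull_box x_le y_le _ _ _ _; apply/on_curveE;
    rewrite ?sqrrN c_sqrt corner.
Qed.

Theorem mainTheorem11 (R : rcfType) (b : R) (hb1 : -1 < b) (hb0 : b != 0) :
  forall x y : R,
    conv_hull (on_curve (b - 1) (- b)) (x, y) <->
    exists u2 u3 u4 v1 v2 : R, psd (mom_mx (b - 1) (- b) x y u2 u3 u4 v1 v2).
Proof.
move=> x y; split; first exact: conv_hull_psd_mom_mx.
by case=> [u2 [u3 [u4 [v1 [v2]]]]]; apply: psd_mom_mx_conv_hull.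
Qed.
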